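(* Let $k\ge1$, $n\ge2$, and let $\phi$ be a monotone $[k]$-edge-labeling of $K^{(2)}_n$. For each $0\le i\le k+1$, the symmetric difference of $X_i$ and $\hat X_i$ has size at most $2$; in particular $\big||X_i|-|\hat X_i|\big|\le2$.
   Context: $K^{(2)}_n$ is the complete graph on $[n]$ with its natural order. A $[k]$-edge-labeling $\phi$ assigns to each pair $uv$ ($u<v$) a label $\phi(uv)\in\{1,\dots,k\}$; it is monotone if $\phi(uv)\le\phi(vw)$ whenever $u<v<w$. Define $\Phi_L(1)=0$ and $\Phi_L(v)=\max\{\phi(uv):u<v\}$ for $v>1$; define $\Phi_R(n)=k+1$ and $\Phi_R(v)=\min\{\phi(vw):w>v\}$ for $v<n$. For $0\le i\le k+1$ let $X_i=\{v\in[n]:\Phi_L(v)=i\}$ and $\hat X_i=\{v\in[n]:\Phi_R(v)=i\}$. *)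

From mathcomp Require Import all_boot all_order.
Set Implicit Arguments. Unset Strict Implicit. Unset Printing Implicit Defensive.

(* Vertices of K_n^(2) are 'I_n (0-based: vertex v of [n] is ordinal v-1),
   ordered by the natural order on nat.  An edge-labeling is a function
   phi : 'I_n -> 'I_n -> nat, where phi u v is the label of the pair uv
   for u < v (values at u >= v are irrelevant). *)

Definition is_labeling (n k : nat) (phi : 'I_n -> 'I_n -> nat) : Prop :=
  forall u v : 'I_n, u < v -> 1 <= phi u v <= k.

Definition monotone (n : nat) (phi : 'I_n -> 'I_n -> nat) : Prop :=
  forall u v w : 'I_n, u < v -> v < w -> phi u v <= phi v w.

Definition PhiL (n : nat) (phi : 'I_n -> 'I_n -> nat) (v : 'I_n) : nat :=
  if v == 0 :> nat then 0 else \max_(u : 'I_n | u < v) phi u v.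

Definition PhiR (n k : nat) (phi : 'I_n -> 'I_n -> nat) (v : 'I_n) : nat :=
  if v.+1 == n then k.+1
  else \big[minn/k.+1]_(w : 'I_n | v < w) phi v w.

Definition X (n : nat) (phi : 'I_n -> 'I_n -> nat) (i : nat) : {set 'I_n} :=
  [set v | PhiL phi v == i].

Definition Xhat (n k : nat) (phi : 'I_n -> 'I_n -> nat) (i : nat) : {set 'I_n} :=
  [set v | PhiR k phi v == i].

(* The values Phi_L and Phi_R interleave along the vertex order:
   Phi_L(v) <= Phi_R(v) by monotonicity, and Phi_R(v) <= phi(vw) <= Phi_L(w)
   for v < w.  So the sequence Phi_L(1), Phi_R(1), Phi_L(2), Phi_R(2), ... is
   nondecreasing, and a value i is taken by Phi_L but not by Phi_R (or the
   converse) at no more than one vertex, namely at an end of the run of i's. *)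

From HB Require Import structures.
From mathcomp Require Import all_boot all_order.

Set Implicit Arguments.
Unset Strict Implicit.
Unset Printing Implicit Defensive.

HB.instance Definition _ := SemiGroup.isComLaw.Build nat minn minnA minnC.

Lemma bigmin_leq (I : finType) (P : pred I) (F : I -> nat) x i :
  P i -> \big[minn/x]_(j | P j) F j <= F i.
Proof. by move=> Pi; rewrite (bigD1 i) //= geq_minl. Qed.

Lemma leq_bigmin (I : finType) (P : pred I) (F : I -> nat) x m :
  m <= x -> (forall j, P j -> m <= F j) -> m <= \big[minn/x]_(j | P j) F j.
Proof.
move=> le_mx le_mF; elim/big_ind: _ => // a b le_ma le_mb.
by rewrite leq_min le_ma le_mb.
Qed.

Lemma leq_card_setD (T : finType) (A B : {set T}) : #|A| <= #|B| + #|A :\: B|.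
Proof. by rewrite -(cardsID B A) leq_add2r subset_leq_card // subsetIr. Qed.

Lemma card_le1_of_no_lt n (A : {set 'I_n}) :
  (forall v w, v \in A -> w \in A -> v < w -> False) -> #|A| <= 1.
Proof.
move=> noA; apply/card_le1_eqP => v w vA wA.
by case: (ltngtP v w) => [/(noA v w vA wA)|/(noA w v wA vA)|/val_inj].
Qed.

Section InterleavedFibers.

Variables (n : nat) (f g : 'I_n -> nat).
Hypothesis f_le_g : forall v, f v <= g v.
Hypothesis g_le_f_later : forall v w : 'I_n, v < w -> g v <= f w.

Lemma card_fiber_setD_fg_le1 i :
  #|[set v | f v == i] :\: [set v | g v == i]| <= 1.
Proof.
apply: card_le1_of_no_lt => v w; rewrite !inE.
move=> /andP[/negP gv_neq /eqP fv] /andP[_ /eqP fw] lt_vw; apply: gv_neq.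
by rewrite eqn_leq -{1}fw g_le_f_later // -fv f_le_g.
Qed.

Lemma card_fiber_setD_gf_le1 i :
  #|[set v | g v == i] :\: [set v | f v == i]| <= 1.
Proof.
apply: card_le1_of_no_lt => v w; rewrite !inE.
move=> /andP[_ /eqP gv] /andP[/negP fw_neq /eqP gw] lt_vw; apply: fw_neq.
by rewrite eqn_leq -{1}gw f_le_g -gv g_le_f_later.
Qed.

End InterleavedFibers.

Lemma PhiL_le_PhiR k n (phi : 'I_n -> 'I_n -> nat) :
  is_labeling k phi -> monotone phi -> forall v, PhiL phi v <= PhiR k phi v.
Proof.
move=> lab mono v; rewrite /PhiL /PhiR; case: eqP => // _.
have le_phi_k (u : 'I_n) : u < v -> phi u v <= k.
  by move=> lt_uv; case/andP: (lab u v lt_uv).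
case: eqP => _; first exact/leqW/bigmax_leqP.
apply/bigmax_leqP => u lt_uv; apply: leq_bigmin => [|w lt_vw].
  exact/leqW/le_phi_k.
exact: mono.
Qed.

Lemma PhiR_le_PhiL k n (phi : 'I_n -> 'I_n -> nat) (v w : 'I_n) :
  v < w -> PhiR k phi v <= PhiL phi w.
Proof.
move=> lt_vw; rewrite /PhiL /PhiR.
rewrite ifN_eq; last by rewrite neq_ltn (leq_ltn_trans lt_vw).
rewrite ifN_eq; last by rewrite -lt0n (leq_ltn_trans _ lt_vw).
apply: (@leq_trans (phi v w)); [exact: bigmin_leq | exact: leq_bigmax_cond].
Qed.

(* The bounds hold for every i. *)
Theorem lemma4p8 (k n : nat) (phi : 'I_n -> 'I_n -> nat) :
  1 <= k -> 2 <= n -> is_labeling k phi -> monotone phi ->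
  forall i : nat, i <= k.+1 ->
    #|(X phi i :\: Xhat k phi i) :|: (Xhat k phi i :\: X phi i)| <= 2 /\
    #|X phi i| <= #|Xhat k phi i| + 2 /\ #|Xhat k phi i| <= #|X phi i| + 2.
Proof.
move=> _ _ lab mono i _.
have LR := PhiL_le_PhiR lab mono.
have RL := @PhiR_le_PhiL k n phi.
have XD := card_fiber_setD_fg_le1 LR RL i.
have XhatD := card_fiber_setD_gf_le1 LR RL i.
split; first exact: leq_trans (leq_card_setU _ _) (leq_add XD XhatD).
split.
- apply: leq_trans (leq_card_setD _ (Xhat k phi i)) _.
  by rewrite leq_add2l (leq_trans XD).
- apply: leq_trans (leq_card_setD _ (X phi i)) _.
  by rewrite leq_add2l (leq_trans XhatD).
Qed.
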